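(* Let $R$ be a commutative ring, $\mathcal C$ an additive category that is $R$-linear, $\mathrm{Hom}$-finite and Krull–Schmidt, and $\mathbb E\colon\mathcal C^{\mathrm{op}}\times\mathcal C\to\mathsf{Ab}$ an $R$-bilinear biadditive functor. Then $\mathbb E\text{-}\mathrm{Ext}(\mathcal C)$ is also $R$-linear, $\mathrm{Hom}$-finite and Krull–Schmidt.
   Context: $\mathcal C$ is $R$-linear if each $\mathcal C(X,Y)$ is an $R$-module with $(\lambda g)f=\lambda(gf)=g(\lambda f)$; $\mathbb E$ is $R$-bilinear if each $\mathbb E(C,A)$ is an $R$-module and $\mathbb E(\lambda c,a)=\lambda\mathbb E(c,a)=\mathbb E(c,\lambda a)$. $\mathrm{Hom}$-finite: each $\mathcal C(X,Y)$ has finite length over $R$. Krull–Schmidt: every object is a finite direct sum of objects with local endomorphism rings. Write $a_*\alpha=\mathbb E(C,a)(\alpha)$, $c^*\beta=\mathbb E(c,A)(\beta)$. The category of extensions $\mathbb E\text{-}\mathrm{Ext}(\mathcal C)$ has objects all $\alpha\in\mathbb E(C,A)$; morphisms $\alpha\to\beta\in\mathbb E(D,B)$ are pairs $(a\colon A\to B,c\colon C\to D)$ with $a_*\alpha=c^*\beta$; composition and addition componentwise, $R$-action $\lambda(a,c)=(\lambda a,\lambda c)$. *)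

From HB Require Import structures.
From mathcomp Require Import all_boot all_algebra.
Set Implicit Arguments. Unset Strict Implicit. Unset Printing Implicit Defensive.
Import GRing.Theory.
Local Open Scope ring_scope.

Definition is_module (R : comPzRingType) (M : Type) (z : M) (add : M -> M -> M)
    (opp : M -> M) (sc : R -> M -> M) : Prop :=
  [/\ (forall x y w, add x (add y w) = add (add x y) w),
      (forall x y, add x y = add y x),
      (forall x, add z x = x),
      (forall x, add (opp x) x = z) &
      [/\ (forall r x y, sc r (add x y) = add (sc r x) (sc r y)),
          (forall r s x, sc (r + s) x = add (sc r x) (sc s x)),
          (forall r s x, sc (r * s) x = sc r (sc s x)) &
          (forall x, sc 1 x = x)]].

(* Submodules (as predicates) and finite length (existence of a composition series). *)
Definition is_submod (R : comPzRingType) (M : Type) (z : M) (add : M -> M -> M)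
    (opp : M -> M) (sc : R -> M -> M) (S : M -> Prop) : Prop :=
  [/\ S z, (forall x y, S x -> S y -> S (add x y)), (forall x, S x -> S (opp x)) &
      (forall r x, S x -> S (sc r x))].

Definition finite_length (R : comPzRingType) (M : Type) (z : M) (add : M -> M -> M)
    (opp : M -> M) (sc : R -> M -> M) : Prop :=
  exists (n : nat) (S : nat -> M -> Prop),
    [/\ (forall i, (i <= n)%N -> is_submod z add opp sc (S i)),
        (forall x, S 0%N x <-> x = z),
        (forall x, S n x) &
        (forall i, (i < n)%N ->
          [/\ (forall x, S i x -> S i.+1 x),
              (exists x, S i.+1 x /\ ~ S i x) &
              (forall T, is_submod z add opp sc T ->
                 (forall x, S i x -> T x) -> (forall x, T x -> S i.+1 x) ->
                 (forall x, T x <-> S i x) \/ (forall x, T x <-> S i.+1 x))])].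

Record RCatData (R : Type) := {
  Ob : Type;
  Hom : Ob -> Ob -> Type;
  idm : forall X, Hom X X;
  comp : forall X Y Z, Hom Y Z -> Hom X Y -> Hom X Z;
  hzero : forall X Y, Hom X Y;
  hadd : forall X Y, Hom X Y -> Hom X Y -> Hom X Y;
  hopp : forall X Y, Hom X Y -> Hom X Y;
  hscale : forall X Y, R -> Hom X Y -> Hom X Y }.
Arguments Ob {R} : rename. Arguments Hom {R C} : rename. Arguments idm {R C} : rename.
Arguments comp {R C X Y Z} : rename. Arguments hzero {R C X Y} : rename. Arguments hadd {R C X Y} : rename.
Arguments hopp {R C X Y} : rename. Arguments hscale {R C X Y} : rename.

Record IsRLinear (R : comPzRingType) (C : RCatData R) : Prop := {
  rl_mod : forall X Y : Ob C, is_module (@hzero _ C X Y) hadd hopp hscale;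
  rl_assoc : forall (X Y Z W : Ob C) (h : Hom Z W) (g : Hom Y Z) (f : Hom X Y),
      comp h (comp g f) = comp (comp h g) f;
  rl_idl : forall (X Y : Ob C) (f : Hom X Y), comp (idm Y) f = f;
  rl_idr : forall (X Y : Ob C) (f : Hom X Y), comp f (idm X) = f;
  rl_addl : forall (X Y Z : Ob C) (g1 g2 : Hom Y Z) (f : Hom X Y),
      comp (hadd g1 g2) f = hadd (comp g1 f) (comp g2 f);
  rl_addr : forall (X Y Z : Ob C) (g : Hom Y Z) (f1 f2 : Hom X Y),
      comp g (hadd f1 f2) = hadd (comp g f1) (comp g f2);
  rl_scl : forall (X Y Z : Ob C) (r : R) (g : Hom Y Z) (f : Hom X Y),
      comp (hscale r g) f = hscale r (comp g f);
  rl_scr : forall (X Y Z : Ob C) (r : R) (g : Hom Y Z) (f : Hom X Y),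
      comp g (hscale r f) = hscale r (comp g f) }.

Definition is_additive (R : Type) (C : RCatData R) : Prop :=
  (exists Z : Ob C, idm Z = hzero) /\
  (forall X Y : Ob C, exists (S : Ob C) (i1 : Hom X S) (i2 : Hom Y S)
      (p1 : Hom S X) (p2 : Hom S Y),
      [/\ comp p1 i1 = idm X, comp p2 i2 = idm Y, comp p1 i2 = hzero,
          comp p2 i1 = hzero & hadd (comp i1 p1) (comp i2 p2) = idm S]).

Definition HomFinite (R : comPzRingType) (C : RCatData R) : Prop :=
  forall X Y : Ob C, finite_length (@hzero _ C X Y) hadd hopp hscale.

Definition is_unit (R : Type) (C : RCatData R) (X : Ob C) (f : Hom X X) : Prop :=
  exists g : Hom X X, comp g f = idm X /\ comp f g = idm X.

Definition local_end (R : Type) (C : RCatData R) (X : Ob C) : Prop :=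
  [/\ idm X <> hzero,
      (forall f g : Hom X X, ~ is_unit f -> ~ is_unit g -> ~ is_unit (hadd f g)) &
      (forall f g : Hom X X, ~ is_unit f -> ~ is_unit (comp g f) /\ ~ is_unit (comp f g))].

Definition KrullSchmidt (R : Type) (C : RCatData R) : Prop :=
  forall X : Ob C, exists (n : nat) (Xs : 'I_n -> Ob C)
      (i : forall k, Hom (Xs k) X) (p : forall k, Hom X (Xs k)),
    [/\ (forall k, local_end (Xs k)),
        (forall k, comp (p k) (i k) = idm (Xs k)),
        (forall k l, k <> l -> comp (p k) (i l) = hzero) &
        \big[hadd/hzero]_(k < n) comp (i k) (p k) = idm X].

(* Data of a functor E : C^op x C -> Ab with R-module values: E C A, and
   Emap c a = E(c,a) : E C A -> E C' A' for c : C' -> C, a : A -> A'. *)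
Record ExtData (R : Type) (C : RCatData R) := {
  Ecar : Ob C -> Ob C -> Type;
  ezero : forall X Y, Ecar X Y;
  eadd : forall X Y, Ecar X Y -> Ecar X Y -> Ecar X Y;
  eopp : forall X Y, Ecar X Y -> Ecar X Y;
  escale : forall X Y, R -> Ecar X Y -> Ecar X Y;
  Emap : forall (C' C0 A A' : Ob C), Hom C' C0 -> Hom A A' -> Ecar C0 A -> Ecar C' A' }.
Arguments Ecar {R C} : rename. Arguments ezero {R C E X Y} : rename. Arguments eadd {R C E X Y} : rename.
Arguments eopp {R C E X Y} : rename. Arguments escale {R C E X Y} : rename.
Arguments Emap {R C E C' C0 A A'} : rename.

Record IsRBilinBifunctor (R : comPzRingType) (C : RCatData R) (E : ExtData C) : Prop := {
  bf_mod : forall X Y : Ob C, is_module (@ezero _ _ E X Y) eadd eopp escale;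
  bf_id : forall (X A : Ob C) (x : Ecar E X A), Emap (idm X) (idm A) x = x;
  bf_comp : forall (C0 C1 C2 A0 A1 A2 : Ob C) (c1 : Hom C1 C0) (c2 : Hom C2 C1)
      (a1 : Hom A0 A1) (a2 : Hom A1 A2) (x : Ecar E C0 A0),
      Emap (comp c1 c2) (comp a2 a1) x = Emap c2 a2 (Emap c1 a1 x);
  bf_hom : forall (C' C0 A A' : Ob C) (c : Hom C' C0) (a : Hom A A') (x y : Ecar E C0 A),
      Emap c a (eadd x y) = eadd (Emap c a x) (Emap c a y);
  bf_addl : forall (C' C0 A A' : Ob C) (c1 c2 : Hom C' C0) (a : Hom A A') (x : Ecar E C0 A),
      Emap (hadd c1 c2) a x = eadd (Emap c1 a x) (Emap c2 a x);
  bf_addr : forall (C' C0 A A' : Ob C) (c : Hom C' C0) (a1 a2 : Hom A A') (x : Ecar E C0 A),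
      Emap c (hadd a1 a2) x = eadd (Emap c a1 x) (Emap c a2 x);
  bf_scl : forall (C' C0 A A' : Ob C) (r : R) (c : Hom C' C0) (a : Hom A A') (x : Ecar E C0 A),
      Emap (hscale r c) a x = escale r (Emap c a x);
  bf_scr : forall (C' C0 A A' : Ob C) (r : R) (c : Hom C' C0) (a : Hom A A') (x : Ecar E C0 A),
      Emap c (hscale r a) x = escale r (Emap c a x) }.

Lemma addmap_0 (M N : Type) (zM : M) (aM : M -> M -> M) (zN : N) (aN : N -> N -> N)
  (oN : N -> N) (f : M -> N) :
  aM zM zM = zM -> (forall x y w, aN x (aN y w) = aN (aN x y) w) ->
  (forall x, aN zN x = x) -> (forall x, aN (oN x) x = zN) ->
  (forall x y, f (aM x y) = aN (f x) (f y)) -> f zM = zN.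
Proof.
move=> HzM Ha Hz Hi Hf.
have H2 : aN (f zM) (f zM) = f zM by rewrite -Hf HzM.
by rewrite -(Hi (f zM)) -{3}H2 Ha Hi Hz.
Qed.

Lemma addmap_N (M N : Type) (zM : M) (aM : M -> M -> M) (oM : M -> M)
  (zN : N) (aN : N -> N -> N) (oN : N -> N) (f : M -> N) :
  aM zM zM = zM -> (forall x, aM (oM x) x = zM) ->
  (forall x y w, aN x (aN y w) = aN (aN x y) w) -> (forall x y, aN x y = aN y x) ->
  (forall x, aN zN x = x) -> (forall x, aN (oN x) x = zN) ->
  (forall x y, f (aM x y) = aN (f x) (f y)) -> forall x, f (oM x) = oN (f x).
Proof.
move=> HzM HiM Ha Hc Hz Hi Hf x.
have f0 : f zM = zN by apply: (addmap_0 (aM:=aM) (oN:=oN)).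
have H1 : aN (f (oM x)) (f x) = zN by rewrite -Hf HiM.
rewrite -[f (oM x)]Hz -(Hi (f x)) -Ha (Hc (f x)) H1.
by rewrite Hc Hz.
Qed.

Record ExtOb (R : Type) (C : RCatData R) (E : ExtData C) := mkExtOb {
  xC : Ob C; xA : Ob C; xal : Ecar E xC xA }.
Arguments xC {R C E} : rename. Arguments xA {R C E} : rename. Arguments xal {R C E} : rename.

(* morphisms alpha -> beta: pairs (a, c) with a_* alpha = c^* beta *)
Definition ExtHom (R : Type) (C : RCatData R) (E : ExtData C) (X Y : ExtOb E) :=
  {p : Hom (xA X) (xA Y) * Hom (xC X) (xC Y) |
     Emap (idm (xC X)) p.1 (xal X) = Emap p.2 (idm (xA Y)) (xal Y)}.

Section ExtCatConstr.
Variables (R : comPzRingType) (C : RCatData R) (E : ExtData C).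
Hypotheses (HC : IsRLinear C) (HE : IsRBilinBifunctor E).

Lemma Emap_r0 (C' C0 A A' : Ob C) (c : Hom C' C0) (x : Ecar E C0 A) :
  Emap c (@hzero _ C A A') x = ezero.
Proof.
have [Ha _ Hz Hi _] := bf_mod HE C' A'.
have [_ _ HzM _ _] := rl_mod HC A A'.
exact: (addmap_0 (aM := hadd) (oN := eopp) (HzM hzero) Ha Hz Hi
          (fun a b => bf_addr HE c a b x)).
Qed.

Lemma Emap_l0 (C' C0 A A' : Ob C) (a : Hom A A') (x : Ecar E C0 A) :
  Emap (@hzero _ C C' C0) a x = ezero.
Proof.
have [Ha _ Hz Hi _] := bf_mod HE C' A'.
have [_ _ HzM _ _] := rl_mod HC C' C0.
exact: (addmap_0 (f := fun c => Emap c a x) (aM := hadd) (oN := eopp) (HzM hzero) Ha Hz Hi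
          (fun c d => bf_addl HE c d a x)).
Qed.

Lemma Emap_rN (C' C0 A A' : Ob C) (c : Hom C' C0) (a : Hom A A') (x : Ecar E C0 A) :
  Emap c (hopp a) x = eopp (Emap c a x).
Proof.
have [Ha Hc Hz Hi _] := bf_mod HE C' A'.
have [_ _ HzM HiM _] := rl_mod HC A A'.
exact: (addmap_N (f := fun a => Emap c a x) (HzM hzero) HiM Ha Hc Hz Hi
          (fun a b => bf_addr HE c a b x)).
Qed.

Lemma Emap_lN (C' C0 A A' : Ob C) (c : Hom C' C0) (a : Hom A A') (x : Ecar E C0 A) :
  Emap (hopp c) a x = eopp (Emap c a x).
Proof.
have [Ha Hc Hz Hi _] := bf_mod HE C' A'.
have [_ _ HzM HiM _] := rl_mod HC C' C0.
exact: (addmap_N (f := fun c => Emap c a x) (HzM hzero) HiM Ha Hc Hz Hi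
          (fun c d => bf_addl HE c d a x)).
Qed.

Definition ext_idm (X : ExtOb E) : ExtHom X X :=
  exist _ (idm (xA X), idm (xC X)) erefl.

Lemma ext_comp_closed (X Y Z : ExtOb E) (g : ExtHom Y Z) (f : ExtHom X Y) :
  Emap (idm (xC X)) (comp (sval g).1 (sval f).1) (xal X)
  = Emap (comp (sval g).2 (sval f).2) (idm (xA Z)) (xal Z).
Proof.
case: g f => [[a' c'] /= H2] [[a c] /= H1] /=.
transitivity (Emap (comp (idm (xC X)) (idm (xC X))) (comp a' a) (xal X)).
  by rewrite rl_idl.
rewrite bf_comp // H1 -bf_comp //.
transitivity (Emap (comp (idm (xC Y)) c) (comp (idm (xA Z)) a') (xal Y)).
  by rewrite !rl_idl // !rl_idr.
rewrite bf_comp // H2 -bf_comp //.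
by rewrite rl_idl.
Qed.

Definition ext_comp (X Y Z : ExtOb E) (g : ExtHom Y Z) (f : ExtHom X Y) : ExtHom X Z :=
  exist _ (comp (sval g).1 (sval f).1, comp (sval g).2 (sval f).2) (ext_comp_closed g f).

Lemma ext_zero_closed (X Y : ExtOb E) :
  Emap (idm (xC X)) (@hzero _ C (xA X) (xA Y)) (xal X)
  = Emap (@hzero _ C (xC X) (xC Y)) (idm (xA Y)) (xal Y).
Proof. by rewrite Emap_r0 Emap_l0. Qed.

Definition ext_zero (X Y : ExtOb E) : ExtHom X Y :=
  exist _ (hzero, hzero) (ext_zero_closed X Y).

Lemma ext_add_closed (X Y : ExtOb E) (f g : ExtHom X Y) :
  Emap (idm (xC X)) (hadd (sval f).1 (sval g).1) (xal X)
  = Emap (hadd (sval f).2 (sval g).2) (idm (xA Y)) (xal Y).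
Proof.
case: f g => [[a c] /= H1] [[a' c'] /= H2] /=.
by rewrite bf_addr // bf_addl // H1 H2.
Qed.

Definition ext_add (X Y : ExtOb E) (f g : ExtHom X Y) : ExtHom X Y :=
  exist _ (hadd (sval f).1 (sval g).1, hadd (sval f).2 (sval g).2) (ext_add_closed f g).

Lemma ext_opp_closed (X Y : ExtOb E) (f : ExtHom X Y) :
  Emap (idm (xC X)) (hopp (sval f).1) (xal X)
  = Emap (hopp (sval f).2) (idm (xA Y)) (xal Y).
Proof.
case: f => [[a c] /= H1] /=.
by rewrite Emap_rN Emap_lN H1.
Qed.

Definition ext_opp (X Y : ExtOb E) (f : ExtHom X Y) : ExtHom X Y :=
  exist _ (hopp (sval f).1, hopp (sval f).2) (ext_opp_closed f).

Lemma ext_scale_closed (X Y : ExtOb E) (r : R) (f : ExtHom X Y) :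
  Emap (idm (xC X)) (hscale r (sval f).1) (xal X)
  = Emap (hscale r (sval f).2) (idm (xA Y)) (xal Y).
Proof.
case: f => [[a c] /= H1] /=.
by rewrite bf_scr // bf_scl // H1.
Qed.

Definition ext_scale (X Y : ExtOb E) (r : R) (f : ExtHom X Y) : ExtHom X Y :=
  exist _ (hscale r (sval f).1, hscale r (sval f).2) (ext_scale_closed r f).

Definition ExtCat : RCatData R :=
  {| Ob := ExtOb E; Hom := @ExtHom R C E; idm := ext_idm; comp := ext_comp;
     hzero := ext_zero; hadd := ext_add; hopp := ext_opp; hscale := ext_scale |}.

End ExtCatConstr.

(* Hom-finiteness passes to E-Ext(C) because a morphism (a, c) of extensions is
   determined by its components, so that Hom(alpha, beta) embeds R-linearly into
   Hom(A, B) x Hom(C, D). For the Krull-Schmidt property, a Hom-finite category is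
   Krull-Schmidt as soon as its idempotents split: by Fitting's lemma (End X has finite
   length) an object all of whose endomorphisms are units or nilpotent is local, and
   otherwise a nontrivial idempotent splits it into two summands with shorter
   endomorphism modules. Conversely, idempotents split in a Krull-Schmidt category:
   one peels off the local summands X0 of X one at a time, according to whether
   p0 e i0 or 1 - p0 e i0 is invertible in End X0. Finally, an idempotent (eA, eC) of
   alpha in E(C, A) splits through (pA)_* (iC)^* alpha once eA = iA pA and eC = iC pC
   split in C. *)

From HB Require Import structures.
From mathcomp Require Import all_boot all_algebra zify.
From Stdlib Require Import Classical ProofIrrelevance.

Set Implicit Arguments.
Unset Strict Implicit.
Unset Printing Implicit Defensive.

Section Modules.
Variable R : comPzRingType.

Record module := Module {
  msort :> Type;
  mzero : msort;
  madd : msort -> msort -> msort;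
  mopp : msort -> msort;
  mscale : R -> msort -> msort;
  moduleP : is_module mzero madd mopp mscale }.

Section ModuleLemmas.
Variable M : module.
Implicit Types x y z : M.

Lemma maddA x y z : madd x (madd y z) = madd (madd x y) z.
Proof. by case: (moduleP M). Qed.
Lemma maddC x y : madd x y = madd y x.
Proof. by case: (moduleP M). Qed.
Lemma madd0l x : madd (mzero M) x = x.
Proof. by case: (moduleP M). Qed.
Lemma maddNl x : madd (mopp x) x = mzero M.
Proof. by case: (moduleP M). Qed.
Lemma madd0r x : madd x (mzero M) = x.
Proof. by rewrite maddC madd0l. Qed.
Lemma maddNr x : madd x (mopp x) = mzero M.
Proof. by rewrite maddC maddNl. Qed.
Lemma maddKl x y : madd (mopp x) (madd x y) = y.
Proof. by rewrite maddA maddNl madd0l. Qed.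
Lemma maddKr x y : madd x (madd (mopp x) y) = y.
Proof. by rewrite maddA maddNr madd0l. Qed.
Lemma mscaleDr r x y : mscale r (madd x y) = madd (mscale r x) (mscale r y).
Proof. by case: (moduleP M) => _ _ _ _ []. Qed.
Lemma mscaleDl r s x : mscale (r + s) x = madd (mscale r x) (mscale s x).
Proof. by case: (moduleP M) => _ _ _ _ []. Qed.
Lemma mscaleA r s x : mscale (r * s) x = mscale r (mscale s x).
Proof. by case: (moduleP M) => _ _ _ _ []. Qed.
Lemma mscale1 x : mscale 1 x = x.
Proof. by case: (moduleP M) => _ _ _ _ []. Qed.

Lemma maddACA x y x' y' : madd (madd x y) (madd x' y') = madd (madd x x') (madd y y').
Proof. by rewrite -!maddA (maddA y) (maddC y) -maddA. Qed.

Lemma mopp_unique x y : madd x y = mzero M -> mopp x = y.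
Proof. by move=> xy; rewrite -[mopp x]madd0r -xy maddKl. Qed.

Lemma mopp0 : mopp (mzero M) = mzero M.
Proof. by apply: mopp_unique; rewrite madd0l. Qed.
Lemma moppK x : mopp (mopp x) = x.
Proof. by apply: mopp_unique; rewrite maddNl. Qed.
Lemma moppD x y : mopp (madd x y) = madd (mopp x) (mopp y).
Proof. by apply: mopp_unique; rewrite maddACA !maddNr madd0l. Qed.
Lemma maddI x y z : madd x y = madd x z -> y = z.
Proof. by move=> e; rewrite -(maddKl x y) e maddKl. Qed.
Lemma mscaler0 r : mscale r (mzero M) = mzero M.
Proof. by apply: (maddI (x := mscale r (mzero M))); rewrite -mscaleDr !madd0r. Qed.
End ModuleLemmas.

Definition is_mlinear (N M : module) (f : N -> M) :=
  (forall x y, f (madd x y) = madd (f x) (f y)) /\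
  (forall r x, f (mscale r x) = mscale r (f x)).

Lemma mlinear0 (N M : module) (f : N -> M) : is_mlinear f -> f (mzero N) = mzero M.
Proof.
case=> fD _; apply: (maddI (x := f (mzero N))).
by rewrite -fD !madd0r.
Qed.

Lemma mlinearN (N M : module) (f : N -> M) : is_mlinear f -> forall x, f (mopp x) = mopp (f x).
Proof.
move=> hf x; apply/esym/mopp_unique.
by rewrite -hf.1 maddNr (mlinear0 hf).
Qed.

Definition submod (M : module) (S : M -> Prop) :=
  is_submod (mzero M) (@madd M) (@mopp M) (@mscale M) S.
Definition mfinite_length (M : module) :=
  finite_length (mzero M) (@madd M) (@mopp M) (@mscale M).

Definition incl (T : Type) (A B : T -> Prop) := forall x, A x -> B x.
Definition eqp (T : Type) (A B : T -> Prop) := forall x, A x <-> B x.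

Definition mnull (M : module) := fun x : M => x = mzero M.
Definition mall (M : module) := fun _ : M => True.
Arguments mnull : clear implicits.
Arguments mall : clear implicits.
Definition preim (N M : module) (K : N -> Prop) (f : N -> M) (A : M -> Prop) :=
  fun x => K x /\ A (f x).
Definition image (N M : module) (f : N -> M) (K : N -> Prop) :=
  fun y => exists2 x, K x & y = f x.
Definition msum (M : module) (A B : M -> Prop) :=
  fun y => exists a b, [/\ A a, B b & y = madd a b].

Lemma submod_mnull (M : module) : submod (mnull M).
Proof.
split=> //= [x y -> ->|x ->|r x ->]; [exact: madd0l | exact: mopp0 | exact: mscaler0].
Qed.

Lemma submod_mall (M : module) : submod (mall M).
Proof. by []. Qed.

Lemma submod_preim (N M : module) (K : N -> Prop) (f : N -> M) (A : M -> Prop) :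
  is_mlinear f -> submod K -> submod A -> submod (preim K f A).
Proof.
move=> hf [K0 KD KN KZ] [A0 AD AN AZ]; split.
- by split; rewrite // (mlinear0 hf).
- by move=> x y [? ?] [? ?]; split; [apply: KD | rewrite hf.1; apply: AD].
- by move=> x [? ?]; split; [apply: KN | rewrite (mlinearN hf); apply: AN].
- by move=> r x [? ?]; split; [apply: KZ | rewrite hf.2; apply: AZ].
Qed.

Lemma submod_image (N M : module) (f : N -> M) (K : N -> Prop) :
  is_mlinear f -> submod K -> submod (image f K).
Proof.
move=> hf [K0 KD KN KZ]; split.
- by exists (mzero N); rewrite ?(mlinear0 hf).
- by move=> _ _ [x Kx ->] [y Ky ->]; exists (madd x y); rewrite ?hf.1 //; apply: KD.
- by move=> _ [x Kx ->]; exists (mopp x); rewrite ?(mlinearN hf) //; apply: KN.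
- by move=> r _ [x Kx ->]; exists (mscale r x); rewrite ?hf.2 //; apply: KZ.
Qed.

Lemma submod_msum (M : module) (A B : M -> Prop) : submod A -> submod B -> submod (msum A B).
Proof.
move=> [A0 AD AN AZ] [B0 BD BN BZ]; split.
- by exists (mzero M), (mzero M); rewrite madd0l.
- move=> _ _ [a [b [Aa Bb ->]]] [a' [b' [Aa' Bb' ->]]].
  by exists (madd a a'), (madd b b'); rewrite maddACA; split; [apply: AD | apply: BD |].
- move=> _ [a [b [Aa Bb ->]]].
  by exists (mopp a), (mopp b); rewrite moppD; split; [apply: AN | apply: BN |].
- move=> r _ [a [b [Aa Bb ->]]].
  by exists (mscale r a), (mscale r b); rewrite mscaleDr; split; [apply: AZ | apply: BZ |].
Qed.

Lemma incl_of_not_strict (T : Type) (A B : T -> Prop) :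
  ~ (exists x, B x /\ ~ A x) -> incl B A.
Proof. by move=> nAB x Bx; apply: NNPP => nAx; apply: nAB; exists x. Qed.

(* [B] is [A] or a simple extension of [A]: a [series] is a composition series
   in which terms may repeat. *)
Definition cover (M : module) (A B : M -> Prop) :=
  incl A B /\
  forall T, submod T -> incl A T -> incl T B -> eqp T A \/ eqp T B.

Definition series (M : module) (P Q : M -> Prop) (m : nat) (S : nat -> M -> Prop) :=
  [/\ forall i, (i <= m)%N -> submod (S i), eqp (S 0%N) P, eqp (S m) Q &
      forall i, (i < m)%N -> cover (S i) (S i.+1)].

Definition length_le (M : module) (P : M -> Prop) (m : nat) :=
  exists S, series (mnull M) P m S.

Lemma cover_eqp_l (M : module) (A A' B : M -> Prop) :
  eqp A A' -> cover A B -> cover A' B.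
Proof.
move=> AA' [AB AB_simple]; split=> [x /AA' /AB //|T sT A'T TB].
have AT : incl A T by move=> x /AA' /A'T.
by case: (AB_simple T sT AT TB) => TA; [left|right] => // x; rewrite TA.
Qed.

Lemma series_eqp (M : module) (P P' Q Q' : M -> Prop) m S :
  eqp P P' -> eqp Q Q' -> series P Q m S -> series P' Q' m S.
Proof. by move=> PP' QQ' [S_sub S0 Sm S_cover]; split=> // x; rewrite ?S0 ?Sm. Qed.

Lemma cover_preim (N M : module) (K : N -> Prop) (f : N -> M) (A B : M -> Prop) :
  is_mlinear f -> submod K -> submod A -> submod B -> cover A B ->
  cover (preim K f A) (preim K f B).
Proof.
move=> hf sK sA sB [AB AB_simple].
have [_ KD KN _] := sK; have [A0 _ _ _] := sA; have [_ BD _ _] := sB.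
split=> [x [Kx /AB] //|T sT AT TB].
have [T0 TD _ _] := sT.
pose T' := msum (image f T) A.
have AT' : incl A T'.
  move=> a Aa; exists (f (mzero N)), a.
  split=> //; first by exists (mzero N).
  by rewrite (mlinear0 hf) madd0l.
have T'B : incl T' B.
  move=> _ [_ [a [[t Tt ->] Aa ->]]].
  by apply: BD; [exact: (TB t Tt).2 | exact: AB].
have [TA'|TB'] := AB_simple T' (submod_msum (submod_image hf sT) sA) AT' T'B.
- left=> x; split=> [Tx|]; last exact: AT.
  split; first by case: (TB x Tx).
  by apply/TA'; exists (f x), (mzero M); split=> //; [exists x | rewrite madd0r].
- right=> x; split=> [|[Kx Bfx]]; first exact: TB.
  have [_ [a [[t Tt ->] Aa fx]]] := (TB' (f x)).2 Bfx.
  have Kt : K t by case: (TB t Tt).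
  have Txt : T (madd x (mopp t)).
    apply: AT; split; first by apply: KD => //; apply: KN.
    by rewrite hf.1 (mlinearN hf) fx maddC maddKl.
  by rewrite -[x]madd0r -(maddNl t) maddA; apply: TD.
Qed.

Lemma series_preim (N M : module) (K : N -> Prop) (f : N -> M) (P Q : M -> Prop) m S :
  is_mlinear f -> submod K -> series P Q m S ->
  series (preim K f P) (preim K f Q) m (fun i => preim K f (S i)).
Proof.
move=> hf sK [S_sub S0 Sm S_cover]; split.
- by move=> i im; apply: submod_preim => //; apply: S_sub.
- by move=> x; rewrite /preim S0.
- by move=> x; rewrite /preim Sm.
- move=> i im; apply: cover_preim => //; last exact: S_cover.
    by apply: S_sub; apply: ltnW.
  exact: S_sub.
Qed.

Lemma series_drop (M : module) (P Q : M -> Prop) m S i :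
  series P Q m.+1 S -> (i <= m)%N -> incl (S i.+1) (S i) ->
  series P Q m (fun j => S (if (j <= i)%N then j else j.+1)).
Proof.
move=> [S_sub S0 Sm S_cover] im stall.
have Si : eqp (S i.+1) (S i) by move=> x; split=> [/stall|/(S_cover i im).1].
split=> [j jm /=|//||j jm /=].
- by case: ifP => _; apply: S_sub; lia.
- case: ifP => mi /=; last exact: Sm.
  move: Sm; have -> : m = i by lia.
  by move=> Sm x; rewrite -Sm Si.
- case: (ltngtP j i) => ji /=; try by apply: S_cover; lia.
  by rewrite ji; apply: (cover_eqp_l Si); apply: S_cover; lia.
Qed.

Lemma series_cat (M : module) (P Q W : M -> Prop) m n S T :
  series P Q m S -> series Q W n T ->
  series P W (m + n) (fun i => if (i <= m)%N then S i else T (i - m)%N).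
Proof.
move=> [S_sub S0 Sm S_cover] [T_sub T0 Tn T_cover]; split.
- by move=> i im /=; case: ifP => ?; [apply: S_sub | apply: T_sub]; lia.
- by [].
- case: ifP => [mn|_]; last by rewrite addKn.
  have n0 : n = 0%N by lia.
  by move=> x; rewrite n0 addn0 Sm -T0 -Tn n0.
- move=> i im /=; case: (ltngtP i m) => mi /=.
  + by apply: S_cover.
  + by rewrite subSn 1?ltnW //; apply: T_cover; lia.
  + rewrite mi subSnn; apply: (@cover_eqp_l _ (T 0%N)); first by move=> x; rewrite T0 Sm.
    by apply: T_cover; lia.
Qed.

Lemma series_preim_surj (N M : module) (K : N -> Prop) (f : N -> M) (Q : M -> Prop) m S :
  is_mlinear f -> submod K -> series (mnull M) Q m S ->
  (forall i, (i < m)%N -> exists x, preim K f (S i.+1) x /\ ~ preim K f (S i) x) ->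
  incl Q (image f K).
Proof.
move=> hf sK [S_sub S0 Sm S_cover] strict.
suff SK : forall i, (i <= m)%N -> incl (S i) (image f K) by move=> y /Sm; apply: SK.
elim=> [_ y /S0 ->|i IH im]; first by exists (mzero N); rewrite ?(mlinear0 hf) //; case: sK.
have [SiSi1 Si_simple] := S_cover i im.
pose W := image f (preim K f (S i.+1)).
have SiW : incl (S i) W.
  move=> y Siy; have [x Kx fx] := IH (ltnW im) y Siy.
  by exists x => //; split=> //; apply: SiSi1; rewrite -fx.
have WSi1 : incl W (S i.+1) by move=> _ [x [_ ?] ->].
have sW : submod W by apply/submod_image/submod_preim/S_sub.
have [WSi|WSi1'] := Si_simple W sW SiW WSi1.
  by have [x [[Kx Sfx] []]] := strict i im; split=> //; apply/WSi; exists x.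
by move=> y /WSi1' [x [Kx _] ->]; exists x.
Qed.

Lemma finite_lengthP (M : module) :
  mfinite_length M <-> exists m, length_le (mall M) m.
Proof.
split=> [[m [S [S_sub S0 Sm S_comp]]]|[m [S]]].
  by exists m, S; split=> // i /S_comp [SS' _ S_simple].
elim: m S => [|m IH] S hS.
  by case: hS => S_sub S0 Sm _; exists 0%N, S; split=> // x; rewrite Sm.
case: (classic (exists i, (i <= m)%N /\ incl (S i.+1) (S i))) => [[i [im stall]]|].
  exact: IH _ (series_drop hS im stall).
move=> no_stall; case: hS => S_sub S0 Sm S_cover.
exists m.+1, S; split=> // [x|i im]; first by rewrite Sm.
have [SS' S_simple] := S_cover i im; split=> //.
by apply: NNPP => nstrict; apply: no_stall; exists i; split; last exact: incl_of_not_strict.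
Qed.

Section InjectivePreimage.
Variables (N M : module) (f : N -> M) (K : N -> Prop) (Q : M -> Prop).
Hypotheses (hf : is_mlinear f) (sK : submod K).
Hypotheses (f_inj : forall x, K x -> f x = mzero M -> x = mzero N) (fKQ : incl K (preim K f Q)).

Lemma series_preim_inj m S :
  series (mnull M) Q m S -> series (mnull N) K m (fun i => preim K f (S i)).
Proof.
move=> /(series_preim hf sK); apply: series_eqp => x; last by split=> [[]|/fKQ].
split=> [[Kx /f_inj -> //]|->]; split; first by case: sK.
exact: mlinear0.
Qed.

Lemma length_le_preim m : length_le Q m -> length_le K m.
Proof. by move=> [S /series_preim_inj]; exists (fun i => preim K f (S i)). Qed.

Lemma length_lt_preim m : length_le Q m -> (exists y, Q y /\ ~ image f K y) ->
  exists2 m', (m' < m)%N & length_le K m'.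
Proof.
move=> [S hS] [y [Qy nKy]].
have [i [im stall]] : exists i, (i < m)%N /\ incl (preim K f (S i.+1)) (preim K f (S i)).
  apply: NNPP => no_stall; apply/nKy/(series_preim_surj hf sK hS _ Qy) => i im.
  apply: NNPP => nstrict; apply: no_stall; exists i; split=> //.
  exact: incl_of_not_strict.
case: m hS im stall => // m hS im stall.
by exists m => //; eexists; apply: series_drop (series_preim_inj hS) im stall.
Qed.

End InjectivePreimage.

Lemma length_dcc (M : module) L (Ds : nat -> M -> Prop) :
  length_le (mall M) L -> (forall k, submod (Ds k)) -> (forall k, incl (Ds k.+1) (Ds k)) ->
  exists n, incl (Ds n) (Ds n.+1).
Proof.
move=> hL sD Ddec; apply: NNPP => no_stable.
have lenD : forall k, exists2 m, (m + k <= L)%N & length_le (Ds k) m.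
  have id_lin : is_mlinear (@id M) by [].
  elim=> [|k [m mk lenDk]].
    by exists L; rewrite ?addn0 //; apply: (length_le_preim id_lin (sD 0%N)) hL.
  have inj : forall x, Ds k.+1 x -> x = mzero M -> x = mzero M by [].
  have incl_k : incl (Ds k.+1) (preim (Ds k.+1) id (Ds k)) by move=> x Dx; split=> //; apply: Ddec.
  have strict : exists y, Ds k y /\ ~ image id (Ds k.+1) y.
    apply: NNPP => nstrict; apply: no_stable; exists k => x Dx.
    by apply: NNPP => nDx; apply: nstrict; exists x; split=> // -[y Dy xy]; apply: nDx; rewrite xy.
  have [m' m'm lenDk1] := length_lt_preim id_lin (sD k.+1) inj incl_k lenDk strict.
  by exists m'; first lia.
by have [m + _] := lenD L.+1; lia.
Qed.

Lemma finite_length_of_jointly_inj (N M1 M2 : module) (f1 : N -> M1) (f2 : N -> M2) :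
  is_mlinear f1 -> is_mlinear f2 ->
  (forall x, f1 x = mzero M1 -> f2 x = mzero M2 -> x = mzero N) ->
  mfinite_length M1 -> mfinite_length M2 -> mfinite_length N.
Proof.
move=> hf1 hf2 f_inj /finite_lengthP [m1 [S1 hS1]] /finite_lengthP [m2 [S2 hS2]].
pose K := preim (mall N) f2 (mnull M2).
have sK : submod K by apply/submod_preim/submod_mnull.
have h1 : series (mnull N) K m1 (fun i => preim K f1 (S1 i)).
  apply: series_eqp (series_preim hf1 sK hS1) => x; last by split=> [[]|].
  split=> [[[_ f2x] f1x]|->]; first exact: f_inj.
  by split; [case: sK | exact: mlinear0].
have h2 : series K (mall N) m2 (fun i => preim (mall N) f2 (S2 i)).
  exact: series_eqp (series_preim hf2 (submod_mall N) hS2).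
by apply/finite_lengthP; exists (m1 + m2)%N; eexists; apply: series_cat h1 h2.
Qed.

End Modules.

Arguments mnull {R} M.
Arguments mall {R} M.

Section LinearCategory.
Variables (R : comPzRingType) (D : RCatData R).
Hypothesis HD : IsRLinear D.

Definition hom_module (X Y : Ob D) : module R := Module (rl_mod HD X Y).

Section HomGroup.
Variables X Y : Ob D.

Lemma haddA : associative (@hadd _ D X Y).
Proof. exact: (@maddA _ (hom_module X Y)). Qed.
Lemma haddC : commutative (@hadd _ D X Y).
Proof. exact: (@maddC _ (hom_module X Y)). Qed.
Lemma hadd0l : left_id hzero (@hadd _ D X Y).
Proof. exact: (@madd0l _ (hom_module X Y)). Qed.
Lemma hadd0r : right_id hzero (@hadd _ D X Y).
Proof. exact: (@madd0r _ (hom_module X Y)). Qed.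
Lemma haddNl (f : Hom X Y) : hadd (hopp f) f = hzero.
Proof. exact: (@maddNl _ (hom_module X Y)). Qed.
Lemma haddNr (f : Hom X Y) : hadd f (hopp f) = hzero.
Proof. exact: (@maddNr _ (hom_module X Y)). Qed.
Lemma haddKr (f g : Hom X Y) : hadd f (hadd (hopp f) g) = g.
Proof. exact: (@maddKr _ (hom_module X Y)). Qed.
Lemma hopp0 : hopp (@hzero _ D X Y) = hzero.
Proof. exact: (@mopp0 _ (hom_module X Y)). Qed.
Lemma hoppK (f : Hom X Y) : hopp (hopp f) = f.
Proof. exact: (@moppK _ (hom_module X Y)). Qed.
Lemma haddI (f g h : Hom X Y) : hadd f g = hadd f h -> g = h.
Proof. exact: (@maddI _ (hom_module X Y)). Qed.
End HomGroup.

HB.instance Definition _ (X Y : Ob D) :=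
  Monoid.isComLaw.Build (Hom X Y) hzero (@hadd _ D X Y) (@haddA X Y) (@haddC X Y) (@hadd0l X Y).

Section Composition.
Variables X Y Z W : Ob D.

Lemma compA (h : Hom Z W) (g : Hom Y Z) (f : Hom X Y) : comp h (comp g f) = comp (comp h g) f.
Proof. exact: rl_assoc. Qed.
Lemma comp1l (f : Hom X Y) : comp (idm Y) f = f.
Proof. exact: rl_idl. Qed.
Lemma comp1r (f : Hom X Y) : comp f (idm X) = f.
Proof. exact: rl_idr. Qed.
Lemma compDl (g g' : Hom Y Z) (f : Hom X Y) : comp (hadd g g') f = hadd (comp g f) (comp g' f).
Proof. exact: rl_addl. Qed.
Lemma compDr (g : Hom Y Z) (f f' : Hom X Y) : comp g (hadd f f') = hadd (comp g f) (comp g f').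
Proof. exact: rl_addr. Qed.

Lemma compZl r (g : Hom Y Z) (f : Hom X Y) : comp (hscale r g) f = hscale r (comp g f).
Proof. exact: rl_scl. Qed.
Lemma compZr r (g : Hom Y Z) (f : Hom X Y) : comp g (hscale r f) = hscale r (comp g f).
Proof. exact: rl_scr. Qed.

Lemma comp_lin_l (f : Hom X Y) : is_mlinear (fun g : hom_module Y Z => comp g f : hom_module X Z).
Proof. by split=> [g g'|r g]; [exact: compDl | exact: compZl]. Qed.
Lemma comp_lin_r (g : Hom Y Z) : is_mlinear (fun f : hom_module X Y => comp g f : hom_module X Z).
Proof. by split=> [f f'|r f]; [exact: compDr | exact: compZr]. Qed.

Lemma comp0l (f : Hom X Y) : comp (@hzero _ D Y Z) f = hzero.
Proof. exact: (mlinear0 (comp_lin_l f)). Qed.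
Lemma comp0r (g : Hom Y Z) : comp g (@hzero _ D X Y) = hzero.
Proof. exact: (mlinear0 (comp_lin_r g)). Qed.
Lemma compNl (g : Hom Y Z) (f : Hom X Y) : comp (hopp g) f = hopp (comp g f).
Proof. exact: (mlinearN (comp_lin_l f)). Qed.
Lemma compNr (g : Hom Y Z) (f : Hom X Y) : comp g (hopp f) = hopp (comp g f).
Proof. exact: (mlinearN (comp_lin_r g)). Qed.

Lemma comp_suml n (F : 'I_n -> Hom Y Z) (f : Hom X Y) :
  comp (\big[hadd/hzero]_(k < n) F k) f = \big[hadd/hzero]_(k < n) comp (F k) f.
Proof. by apply: (big_morph (fun g => comp g f)) => [g g'|]; [exact: compDl | exact: comp0l]. Qed.
Lemma comp_sumr n (g : Hom Y Z) (F : 'I_n -> Hom X Y) :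
  comp g (\big[hadd/hzero]_(k < n) F k) = \big[hadd/hzero]_(k < n) comp g (F k).
Proof. by apply: (big_morph (comp g)) => [f f'|]; [exact: compDr | exact: comp0r]. Qed.
End Composition.

Definition idempotent (X : Ob D) (e : Hom X X) := comp e e = e.

Definition splits (X : Ob D) (e : Hom X X) :=
  exists (Y : Ob D) (i : Hom Y X) (p : Hom X Y), comp p i = idm Y /\ comp i p = e.

Definition idempotent_complete :=
  forall (X : Ob D) (e : Hom X X), idempotent e -> splits e.

Definition is_biproduct (X Y1 Y2 : Ob D) (i1 : Hom Y1 X) (i2 : Hom Y2 X)
    (p1 : Hom X Y1) (p2 : Hom X Y2) :=
  [/\ comp p1 i1 = idm Y1, comp p2 i2 = idm Y2, comp p1 i2 = hzero,
      comp p2 i1 = hzero & hadd (comp i1 p1) (comp i2 p2) = idm X].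

Lemma splits_conj (X Y : Ob D) (e : Hom X X) (g : Hom Y Y) (a : Hom Y X) (b : Hom X Y) :
  comp a b = e -> comp b a = g -> idempotent e -> splits g -> splits e.
Proof.
move=> ab ba ee [Z [c [d [dc cd]]]].
exists Z, (comp a c), (comp d b); split.
  have -> : comp (comp d b) (comp a c) = comp (comp d (comp b a)) c by rewrite !compA.
  by rewrite ba -cd !compA dc comp1l dc.
have -> : comp (comp a c) (comp d b) = comp a (comp (comp c d) b) by rewrite !compA.
by rewrite cd -ba -ee -ab !compA.
Qed.

Lemma comp_split_orth (X Y1 Y2 : Ob D) (i1 : Hom Y1 X) (p1 : Hom X Y1) (i2 : Hom Y2 X)
    (p2 : Hom X Y2) :
  comp p1 i1 = idm Y1 -> comp p2 i2 = idm Y2 -> comp (comp i1 p1) (comp i2 p2) = hzero ->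
  comp p1 i2 = hzero.
Proof.
move=> p1i1 p2i2 orth.
have -> : comp p1 i2 = comp p1 (comp (comp (comp i1 p1) (comp i2 p2)) i2).
  by rewrite !compA p1i1 comp1l -compA p2i2 comp1r.
by rewrite orth comp0l comp0r.
Qed.

Lemma compA4 (X1 X2 X3 X4 X5 : Ob D) (a : Hom X4 X5) (b : Hom X3 X4) (c : Hom X2 X3)
    (d : Hom X1 X2) :
  comp (comp a b) (comp c d) = comp a (comp (comp b c) d).
Proof. by rewrite !compA. Qed.

Lemma local_unit_or_unit_1sub (X : Ob D) (u : Hom X X) :
  local_end X -> is_unit u \/ is_unit (hadd (idm X) (hopp u)).
Proof.
move=> [_ nonunitD _]; apply: NNPP => units.
apply: (nonunitD u (hadd (idm X) (hopp u))).
- by move=> uu; apply: units; left.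
- by move=> uu; apply: units; right.
by rewrite haddC -haddA haddNl hadd0r; exists (idm X); rewrite comp1l.
Qed.

Section AdditiveSplitting.
Hypothesis Hadd : is_additive D.

Lemma splits0 (X : Ob D) : splits (@hzero _ D X X).
Proof. by have [Z Z0] := Hadd.1; exists Z, hzero, hzero; rewrite !comp0l Z0. Qed.

Lemma splitsD (X : Ob D) (e1 e2 : Hom X X) :
  splits e1 -> splits e2 -> comp e1 e2 = hzero -> comp e2 e1 = hzero -> splits (hadd e1 e2).
Proof.
move=> [Y1 [i1 [p1 [p1i1 e1E]]]] [Y2 [i2 [p2 [p2i2 e2E]]]] e12 e21.
have p1i2 : comp p1 i2 = hzero by apply: comp_split_orth p1i1 p2i2 _; rewrite e1E e2E.
have p2i1 : comp p2 i1 = hzero by apply: comp_split_orth p2i2 p1i1 _; rewrite e1E e2E.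
have [S [j1 [j2 [q1 [q2 [q1j1 q2j2 q1j2 q2j1 jq]]]]]] := Hadd.2 Y1 Y2.
exists S, (hadd (comp i1 q1) (comp i2 q2)), (hadd (comp j1 p1) (comp j2 p2)); split.
  rewrite compDl !compDr !compA4 p1i1 p2i2 p1i2 p2i1 !comp1l !comp0l !comp0r.
  by rewrite hadd0r hadd0l.
rewrite compDl !compDr !compA4 q1j1 q2j2 q1j2 q2j1 !comp1l !comp0l !comp0r.
by rewrite hadd0r hadd0l e1E e2E.
Qed.

Section SplitStep.
Variables (X X0 : Ob D) (i0 : Hom X0 X) (p0 : Hom X X0) (Q1 e : Hom X X).
Hypotheses (Q1Q1 : idempotent Q1) (ee : idempotent e).
Hypothesis eQ : comp e (hadd (comp i0 p0) Q1) = e.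
Hypothesis splits_below : forall h : Hom X X, idempotent h -> comp h Q1 = h -> splits h.

(* If [p0 e i0] has a left inverse, [X0] splits off the image of [e] as [E'], and
   [e - E'] is killed by [i0], hence lives below [Q1]. *)
Lemma splits_step_unit (v : Hom X0 X0) : comp v (comp p0 (comp e i0)) = idm X0 -> splits e.
Proof.
move=> vu.
pose a := comp e i0; pose b := comp p0 e; pose E' := comp a (comp v b).
have ea : comp e a = a by rewrite /a compA ee.
have be : comp b e = b by rewrite /b -compA ee.
have vba : comp (comp v b) a = idm X0 by rewrite -compA compA4 ee.
have sE' : splits E' by exists X0, a, (comp v b).
have eE' : comp e E' = E' by rewrite /E' compA ea.
have E'e : comp E' e = E' by rewrite /E' -(compA a) -(compA v) be.
have E'E' : idempotent E' by rewrite /idempotent /E' compA4 vba comp1l.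
pose h := hadd e (hopp E').
have hE' : comp h E' = hzero by rewrite /h compDl compNl eE' E'E' haddNr.
have E'h : comp E' h = hzero by rewrite /h compDr compNr E'e E'E' haddNr.
have hh : idempotent h.
  by rewrite /idempotent [in comp h h]/h compDr compNr hE' hopp0 hadd0r /h compDl compNl ee E'e.
have hi0 : comp h i0 = hzero.
  by rewrite /h compDl compNl /E' -(compA a) -(compA v) /b -(compA p0) vu comp1r haddNr.
have hQ1 : comp h Q1 = h.
  have hQ : comp h (hadd (comp i0 p0) Q1) = h by rewrite /h compDl compNl eQ /E' /b -!compA eQ.
  by rewrite -[RHS]hQ compDr compA hi0 comp0l hadd0l.
have -> : e = hadd E' h by rewrite /h haddC -haddA haddNl hadd0r.
exact: splitsD sE' (splits_below hh hQ1) E'h hE'.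
Qed.

(* Otherwise [1 - p0 e i0] has a left inverse [t]; then [y := e + e i0 t p0 e] is a
   left inverse of [e Q1 e = e - e i0 p0 e] in [e End(X) e], which makes [e] conjugate
   to the idempotent [y Q1] below [Q1]. *)
Lemma splits_step_nonunit (t : Hom X0 X0) :
  comp t (hadd (idm X0) (hopp (comp p0 (comp e i0)))) = idm X0 -> splits e.
Proof.
move=> tu.
pose a := comp e i0; pose b := comp p0 e; pose u := comp p0 (comp e i0).
have ba : comp b a = u by rewrite /b /a compA4 ee.
have ea : comp e a = a by rewrite /a compA ee.
have be : comp b e = b by rewrite /b -compA ee.
have t_eq : t = hadd (idm X0) (comp t u).
  by move: tu; rewrite compDr comp1r compNr -/u => <-; rewrite -haddA haddNl hadd0r.
pose y := hadd e (comp a (comp t b)).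
have ye : comp y e = y by rewrite /y compDl ee -(compA a) -(compA t) be.
have ey : comp e y = y by rewrite /y compDr ee compA ea.
have ya : comp y a = comp a t.
  by rewrite /y compDl ea -(compA a) -(compA t) ba [in RHS]t_eq compDr comp1r.
have split_e : hadd (comp a b) (comp e (comp Q1 e)) = e.
  by rewrite /a /b -!compA (compA i0 p0 e) -compDr -compDl compA eQ ee.
have eQ1e : comp e (comp Q1 e) = hadd e (hopp (comp a b)).
  apply: (haddI (f := comp a b)); rewrite split_e.
  by rewrite haddC -haddA haddNl hadd0r.
have yx : comp y (comp e (comp Q1 e)) = e.
  by rewrite eQ1e compDr compNr ye compA ya /y -compA -haddA haddNr hadd0r.
have yQy : comp y (comp Q1 y) = y.
  have -> : comp y (comp Q1 y) = comp (comp y (comp e (comp Q1 e))) y.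
    by rewrite -{1}ye -{2}ey !compA.
  by rewrite yx ey.
pose h := comp y Q1.
have hh : idempotent h by rewrite /idempotent /h compA -(compA y Q1 y) yQy.
have hQ1 : comp h Q1 = h by rewrite /h -compA Q1Q1.
apply: (splits_conj (a := h) (b := e) _ _ ee (splits_below hh hQ1)).
  by rewrite /h -compA -{1}ye -compA yx.
by rewrite /h compA ey.
Qed.

Lemma splits_step : local_end X0 -> splits e.
Proof.
move=> /(local_unit_or_unit_1sub (comp p0 (comp e i0))) [[v [vu _]]|[t [tu _]]].
  exact: splits_step_unit vu.
exact: splits_step_nonunit tu.
Qed.

End SplitStep.

Definition local_family (X : Ob D) n (Xs : 'I_n -> Ob D) (i : forall k, Hom (Xs k) X)
    (p : forall k, Hom X (Xs k)) :=
  [/\ forall k, local_end (Xs k), forall k, comp (p k) (i k) = idm (Xs k) &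
      forall k l, k <> l -> comp (p k) (i l) = hzero].

Lemma local_family_idempotent (X : Ob D) n (Xs : 'I_n -> Ob D) (i : forall k, Hom (Xs k) X)
    (p : forall k, Hom X (Xs k)) :
  local_family i p -> idempotent (\big[hadd/hzero]_(k < n) comp (i k) (p k)).
Proof.
move=> [_ pi orth].
have pQ l : comp (p l) (\big[hadd/hzero]_(k < n) comp (i k) (p k)) = p l.
  rewrite comp_sumr (bigD1 l) //= big1 ?hadd0r => [|k kl]; first by rewrite compA pi comp1l.
  by rewrite compA orth ?comp0l // => lk; rewrite lk eqxx in kl.
by rewrite /idempotent comp_suml; apply: eq_bigr => k _; rewrite -compA pQ.
Qed.

Lemma splits_local_family n : forall (X : Ob D) (Xs : 'I_n -> Ob D)
    (i : forall k, Hom (Xs k) X) (p : forall k, Hom X (Xs k)) (e : Hom X X),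
  local_family i p -> idempotent e ->
  comp e (\big[hadd/hzero]_(k < n) comp (i k) (p k)) = e -> splits e.
Proof.
elim: n => [|n IH] X Xs i p e fam ee.
  by rewrite big_ord0 comp0r => <-; apply: splits0.
have [loc pi orth] := fam.
have fam' : local_family (fun k => i (lift ord0 k)) (fun k => p (lift ord0 k)).
  by split=> [k|k|k l kl]; [exact: loc | exact: pi | apply: orth => /lift_inj].
rewrite big_ord_recl => eQ.
exact: splits_step (local_family_idempotent fam') ee eQ (fun h => IH _ _ _ _ h fam') (loc ord0).
Qed.

Lemma idempotent_complete_of_krull_schmidt : KrullSchmidt D -> idempotent_complete.
Proof.
move=> HK X e ee; have [n [Xs [i [p [loc pi orth sum]]]]] := HK X.
by apply: (@splits_local_family n X Xs i p) => //; rewrite sum comp1r.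
Qed.

End AdditiveSplitting.

Section Endomorphisms.
Variable X : Ob D.
Implicit Types f g h e : Hom X X.

Fixpoint hpow f k : Hom X X := if k is k'.+1 then comp f (hpow f k') else idm X.

Lemma hpowD f j k : hpow f (j + k) = comp (hpow f j) (hpow f k).
Proof. by elim: j => [|j IH] /=; rewrite ?comp1l // IH compA. Qed.

Lemma hpowSr f k : hpow f k.+1 = comp (hpow f k) f.
Proof. by rewrite -addn1 hpowD /= comp1r. Qed.

Definition nilpotent f := exists n, hpow f n = hzero.

Lemma idm0_of_linv_nilpotent f g : comp g f = idm X -> nilpotent f -> idm X = hzero.
Proof.
move=> gf [n fn].
have gkfk k : comp (hpow g k) (hpow f k) = idm X.
  by elim: k => [|k IH]; rewrite ?comp1l // hpowSr /= compA4 gf comp1l.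
by rewrite -(gkfk n) fn comp0r.
Qed.

Lemma idm0_of_rinv_nilpotent f g : comp f g = idm X -> nilpotent f -> idm X = hzero.
Proof.
move=> fg [n fn].
have fkgk k : comp (hpow f k) (hpow g k) = idm X.
  by elim: k => [|k IH]; rewrite ?comp1l // hpowSr /= compA4 fg comp1l.
by rewrite -(fkgk n) fn comp0l.
Qed.

Lemma is_unit_of_linv_rinv f g h : comp g f = idm X -> comp f h = idm X -> is_unit f.
Proof.
move=> gf fh; have hg : h = g by rewrite -[h]comp1l -gf -compA fh comp1r.
by exists h; rewrite {1}hg.
Qed.

Fixpoint hgeom f k : Hom X X := if k is k'.+1 then hadd (idm X) (comp f (hgeom f k')) else hzero.

Lemma hgeom_comm f k : comp f (hgeom f k) = comp (hgeom f k) f.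
Proof.
elim: k => [|k IH] /=; first by rewrite comp0l comp0r.
by rewrite compDr compDl comp1l comp1r -compA -IH.
Qed.

Lemma hgeomP f k : comp (hadd (idm X) (hopp f)) (hgeom f k) = hadd (idm X) (hopp (hpow f k)).
Proof.
elim: k => [|k IH] /=; first by rewrite comp0r haddNr.
have comm : comp (hadd (idm X) (hopp f)) f = comp f (hadd (idm X) (hopp f)).
  by rewrite compDl compDr compNl compNr comp1l comp1r.
rewrite compDr comp1r compA comm -compA IH compDr comp1r compNr.
by rewrite haddA -[hadd (hadd _ (hopp f)) f]haddA haddNl hadd0r.
Qed.

Lemma unit_1sub_nilpotent f : nilpotent f -> is_unit (hadd (idm X) (hopp f)).
Proof.
move=> [n fn]; exists (hgeom f n).
have inv : comp (hadd (idm X) (hopp f)) (hgeom f n) = idm X by rewrite hgeomP fn hopp0 hadd0r.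
by split=> //; rewrite -[RHS]inv compDl compDr comp1l comp1r compNl compNr hgeom_comm.
Qed.

Lemma local_end_of_unit_or_nilpotent :
  idm X <> hzero -> (forall f, is_unit f \/ nilpotent f) -> local_end X.
Proof.
move=> X_nz dich.
have nonunit_ideal f g : ~ is_unit f -> ~ is_unit (comp g f) /\ ~ is_unit (comp f g).
  have [//|fnil] := dich f; split=> [[w [wgf _]]|[w [_ fgw]]]; apply: X_nz.
    by apply: (idm0_of_linv_nilpotent (g := comp w g)) fnil; rewrite -compA.
  by apply: (idm0_of_rinv_nilpotent (g := comp g w)) fnil; rewrite compA.
split=> // f g nf ng [w [w_fg fg_w]].
have [wf|wfnil] := dich (comp w f); first by case: (nonunit_ideal f w nf).
have wg : comp w g = hadd (idm X) (hopp (comp w f)).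
  by rewrite -w_fg compDr haddC haddA haddNl hadd0l.
by case: (nonunit_ideal g w ng); rewrite wg; case; apply: unit_1sub_nilpotent.
Qed.

Lemma hpow_regular_r f g n k : hpow f n = comp (hpow f n.+1) g -> (n <= k)%N ->
  hpow f k = comp (comp (hpow f k) (hpow f k)) (hpow g k).
Proof.
move=> fn nk.
have shift j : hpow f n = comp (hpow f (n + j)) (hpow g j).
  elim: j => [|j IH]; first by rewrite addn0 comp1r.
  have step : hpow f (n + j) = comp (hpow f (n + j).+1) g.
    by rewrite addnC hpowD fn compA -hpowD addnS.
  by rewrite IH step -compA addnS.
rewrite -{1}(subnK nk) hpowD (shift k) compA -hpowD -hpowD.
by congr (comp (hpow f _) _); lia.
Qed.

Lemma hpow_regular_l f h m k : hpow f m = comp h (hpow f m.+1) -> (m <= k)%N ->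
  hpow f k = comp (hpow h k) (comp (hpow f k) (hpow f k)).
Proof.
move=> fm mk.
have shift j : hpow f m = comp (hpow h j) (hpow f (m + j)).
  elim: j => [|j IH]; first by rewrite addn0 comp1l.
  have step : hpow f (m + j) = comp h (hpow f (m + j).+1).
    by rewrite hpowD fm -compA -hpowD addSn.
  by rewrite IH step compA -hpowSr addnS.
rewrite -{1}(subnKC mk) hpowD (shift k) -compA -hpowD -hpowD.
by congr (comp _ (hpow f _)); lia.
Qed.

Lemma hpow_stable_r f L : length_le (mall (hom_module X X)) L ->
  exists n g, hpow f n = comp (hpow f n.+1) g.
Proof.
move=> lenX.
pose Ds k := image (fun g : hom_module X X => comp (hpow f k) g : hom_module X X) (mall _).
have sD k : submod (Ds k) := submod_image (comp_lin_r X (hpow f k)) (submod_mall _).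
have Ddec k : incl (Ds k.+1) (Ds k).
  by move=> _ [g _ ->]; exists (comp f g); rewrite // hpowSr compA.
have [n stable] := length_dcc lenX sD Ddec.
have [|g _ fn] := stable (hpow f n); first by exists (idm X); rewrite ?comp1r.
by exists n, g.
Qed.

Lemma hpow_stable_l f L : length_le (mall (hom_module X X)) L ->
  exists m h, hpow f m = comp h (hpow f m.+1).
Proof.
move=> lenX.
pose Ds k := image (fun g : hom_module X X => comp g (hpow f k) : hom_module X X) (mall _).
have sD k : submod (Ds k) := submod_image (comp_lin_l X (hpow f k)) (submod_mall _).
have Ddec k : incl (Ds k.+1) (Ds k).
  by move=> _ [g _ ->]; exists (comp g f); rewrite //= compA.
have [m stable] := length_dcc lenX sD Ddec.
have [|h _ fm] := stable (hpow f m); first by exists (idm X); rewrite ?comp1l.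
by exists m, h.
Qed.

Lemma regular_idempotent x g h : x = comp (comp x x) g -> x = comp h (comp x x) ->
  [/\ idempotent (comp x g), comp (comp x g) x = x & comp x g = comp h x].
Proof.
move=> xg hx.
have xg_h : comp x g = comp h x by rewrite {1}hx -compA -xg.
have exx : comp (comp x g) x = x by rewrite xg_h -compA -hx.
by split=> //; rewrite /idempotent compA exx.
Qed.

Lemma fitting f L : length_le (mall (hom_module X X)) L ->
  [\/ is_unit f, nilpotent f | exists e, [/\ idempotent e, e <> hzero & e <> idm X]].
Proof.
move=> lenX.
have [n [g fn]] := hpow_stable_r f lenX; have [m [h fm]] := hpow_stable_l f lenX.
pose N := (n + m).+1; pose x := hpow f N.
have nN : (n <= N)%N by rewrite /N; lia.
have mN : (m <= N)%N by rewrite /N; lia.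
have [ee ex xg_hx] := regular_idempotent (hpow_regular_r fn nN) (hpow_regular_l fm mN).
case: (classic (comp x (hpow g N) = hzero)) => [e0|e_nz].
  by apply: Or32; exists N; rewrite -ex e0 comp0l.
case: (classic (comp x (hpow g N) = idm X)) => [e1|e_ne1].
  apply/Or31/(is_unit_of_linv_rinv (g := comp (hpow h N) (hpow f (n + m)))
    (h := comp (hpow f (n + m)) (hpow g N))).
    by rewrite -compA -hpowSr -/x -xg_hx.
  by rewrite compA -e1.
by apply: Or33; exists (comp x (hpow g N)).
Qed.

End Endomorphisms.

Definition local_decomposable (X : Ob D) :=
  exists (n : nat) (Xs : 'I_n -> Ob D) (i : forall k, Hom (Xs k) X) (p : forall k, Hom X (Xs k)),
    [/\ (forall k, local_end (Xs k)),
        (forall k, comp (p k) (i k) = idm (Xs k)),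
        (forall k l, k <> l -> comp (p k) (i l) = hzero) &
        \big[hadd/hzero]_(k < n) comp (i k) (p k) = idm X].

Lemma decomposable0 (X : Ob D) : idm X = hzero -> local_decomposable X.
Proof.
move=> X0; exists 0%N, (fun _ => X), (fun _ => hzero), (fun _ => hzero).
by split=> [[]|[]|[]|] //; rewrite big_ord0.
Qed.

Lemma decomposable_local (X : Ob D) : local_end X -> local_decomposable X.
Proof.
move=> loc; exists 1%N, (fun _ => X), (fun _ => idm X), (fun _ => idm X).
by split=> // [k|k l|]; rewrite ?big_ord1 ?comp1l // (ord1 k) (ord1 l).
Qed.

Lemma decomposable_biprod (X Y1 Y2 : Ob D) (i1 : Hom Y1 X) (i2 : Hom Y2 X)
    (p1 : Hom X Y1) (p2 : Hom X Y2) :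
  is_biproduct i1 i2 p1 p2 -> local_decomposable Y1 -> local_decomposable Y2 ->
  local_decomposable X.
Proof.
move=> [p1i1 p2i2 p1i2 p2i1 sum12].
move=> [n1 [Xs1 [j1 [q1 [loc1 qj1 orth1 sum1]]]]] [n2 [Xs2 [j2 [q2 [loc2 qj2 orth2 sum2]]]]].
(* summands packed as dependent pairs, so that the two families concatenate
   without a dependent match on [split k] *)
pose summand := {Y : Ob D & (Hom Y X * Hom X Y)%type}.
pose s (k : 'I_(n1 + n2)) : summand := match split k with
  | inl a => existT _ (Xs1 a) (comp i1 (j1 a), comp (q1 a) p1)
  | inr b => existT _ (Xs2 b) (comp i2 (j2 b), comp (q2 b) p2) end.
exists (n1 + n2)%N, (fun k => projT1 (s k)), (fun k => (projT2 (s k)).1),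
  (fun k => (projT2 (s k)).2); split.
- by move=> k; rewrite /s; case: (split k) => a /=; [exact: loc1 | exact: loc2].
- move=> k; rewrite /s; case: (split k) => a /=; rewrite compA4.
    by rewrite p1i1 comp1l qj1.
  by rewrite p2i2 comp1l qj2.
- move=> k l kl; rewrite /s; have := splitK k; have := splitK l.
  case: (split k) => a; case: (split l) => b /= lb ka; rewrite compA4.
  + by rewrite p1i1 comp1l orth1 // => ab; apply: kl; rewrite -ka -lb ab.
  + by rewrite p1i2 comp0l comp0r.
  + by rewrite p2i1 comp0l comp0r.
  + by rewrite p2i2 comp1l orth2 // => ab; apply: kl; rewrite -ka -lb ab.
- rewrite big_split_ord.
  rewrite (eq_bigr (fun a => comp i1 (comp (comp (j1 a) (q1 a)) p1))) => [|a _]; last first.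
    by rewrite /s (unsplitK (inl a : 'I_n1 + 'I_n2)) /= compA4.
  rewrite (eq_bigr (fun b => comp i2 (comp (comp (j2 b) (q2 b)) p2))) => [|b _]; last first.
    by rewrite /s (unsplitK (inr b : 'I_n1 + 'I_n2)) /= compA4.
  by rewrite -!comp_sumr -!comp_suml sum1 sum2 !comp1l.
Qed.

Lemma length_summand (X Y : Ob D) (i : Hom Y X) (p : Hom X Y) m :
  comp p i = idm Y -> comp i p <> idm X -> length_le (mall (hom_module X X)) m ->
  exists2 m', (m' < m)%N & length_le (mall (hom_module Y Y)) m'.
Proof.
move=> pi ip_ne1 lenX.
pose f (g : hom_module Y Y) : hom_module X X := comp i (comp g p).
have f_lin : is_mlinear f by split=> [g g'|r g]; rewrite /f ?compDl ?compDr ?compZl ?compZr.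
have f_inj g : mall _ g -> f g = hzero -> g = hzero.
  move=> _ fg0; have <- : comp p (comp (f g) i) = g.
    by rewrite /f !compA pi comp1l -compA pi comp1r.
  by rewrite fg0 comp0l comp0r.
apply: (length_lt_preim f_lin (submod_mall _) f_inj _ lenX) => //.
exists (idm X); split=> // -[g _ fg]; apply: ip_ne1.
by rewrite -[comp i p]comp1r fg /f compA4 pi comp1l.
Qed.

Lemma idempotent_1sub (X : Ob D) (e : Hom X X) :
  idempotent e -> idempotent (hadd (idm X) (hopp e)).
Proof.
by move=> ee; rewrite /idempotent compDl comp1l compNl compDr comp1r compNr ee haddNr hopp0 hadd0r.
Qed.

Lemma biproduct_of_complement (X Y1 Y2 : Ob D) (e : Hom X X) (i1 : Hom Y1 X) (i2 : Hom Y2 X)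
    (p1 : Hom X Y1) (p2 : Hom X Y2) :
  idempotent e -> comp p1 i1 = idm Y1 -> comp i1 p1 = e ->
  comp p2 i2 = idm Y2 -> comp i2 p2 = hadd (idm X) (hopp e) -> is_biproduct i1 i2 p1 p2.
Proof.
move=> ee p1i1 i1p1 p2i2 i2p2; split=> //.
- by apply: comp_split_orth p1i1 p2i2 _; rewrite i1p1 i2p2 compDr comp1r compNr ee haddNr.
- by apply: comp_split_orth p2i2 p1i1 _; rewrite i1p1 i2p2 compDl comp1l compNl ee haddNr.
- by rewrite i1p1 i2p2 [hadd (idm X) _]haddC haddKr.
Qed.

Lemma krull_schmidt_of_idempotent_complete :
  HomFinite D -> idempotent_complete -> KrullSchmidt D.
Proof.
move=> HF split_idem X.
have [L lenX] := (finite_lengthP (hom_module X X)).1 (HF X X).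
elim/ltn_ind: L X lenX => L IH Y lenY.
case: (classic (idm Y = hzero)) => [Y0|Y_nz]; first exact: decomposable0.
case: (classic (forall f : Hom Y Y, is_unit f \/ nilpotent f)) => [dich|].
  exact/decomposable_local/local_end_of_unit_or_nilpotent.
move=> /not_all_ex_not [f f_not_dich].
have [fu|fnil|[e [ee e_nz e_ne1]]] := fitting f lenY.
- by case: f_not_dich; left.
- by case: f_not_dich; right.
have [Y1 [i1 [p1 [p1i1 i1p1]]]] := split_idem _ _ ee.
have [Y2 [i2 [p2 [p2i2 i2p2]]]] := split_idem _ _ (idempotent_1sub ee).
have [m1 m1L lenY1] : exists2 m1, (m1 < L)%N & length_le (mall (hom_module Y1 Y1)) m1.
  by apply: length_summand p1i1 _ lenY; rewrite i1p1.
have [m2 m2L lenY2] : exists2 m2, (m2 < L)%N & length_le (mall (hom_module Y2 Y2)) m2.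
  apply: length_summand p2i2 _ lenY; rewrite i2p2 => e0; apply: e_nz.
  have : hopp e = hzero by apply: (haddI (f := idm Y)); rewrite e0 hadd0r.
  by move=> /(congr1 hopp); rewrite hoppK hopp0.
exact: decomposable_biprod (biproduct_of_complement ee p1i1 i1p1 p2i2 i2p2)
  (IH _ m1L _ lenY1) (IH _ m2L _ lenY2).
Qed.

End LinearCategory.

Section ExtensionCategory.
Variables (R : comPzRingType) (C : RCatData R) (E : ExtData C).
Hypotheses (HC : IsRLinear C) (HE : IsRBilinBifunctor E).

Lemma ext_hom_eq (X Y : ExtOb E) (f g : ExtHom X Y) :
  (sval f).1 = (sval g).1 -> (sval f).2 = (sval g).2 -> f = g.
Proof.
case: f g => [[a c] fP] [[a' c'] gP] /= aa' cc'; subst a' c'.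
by rewrite (proof_irrelevance _ fP gP).
Qed.

Lemma ExtCat_linear : IsRLinear (ExtCat HC HE).
Proof.
split.
- move=> X Y; split; [| | | | split].
  + by move=> f g h; apply: ext_hom_eq; apply: (haddA HC).
  + by move=> f g; apply: ext_hom_eq; apply: (haddC HC).
  + by move=> f; apply: ext_hom_eq; apply: (hadd0l HC).
  + by move=> f; apply: ext_hom_eq; apply: (haddNl HC).
  + by move=> r f g; apply: ext_hom_eq; apply: (mscaleDr (M := hom_module HC _ _)).
  + by move=> r s f; apply: ext_hom_eq; apply: (mscaleDl (M := hom_module HC _ _)).
  + by move=> r s f; apply: ext_hom_eq; apply: (mscaleA (M := hom_module HC _ _)).
  + by move=> f; apply: ext_hom_eq; apply: (mscale1 (M := hom_module HC _ _)).
- by move=> X Y Z W h g f; apply: ext_hom_eq; apply: (compA HC).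
- by move=> X Y f; apply: ext_hom_eq; apply: (comp1l HC).
- by move=> X Y f; apply: ext_hom_eq; apply: (comp1r HC).
- by move=> X Y Z g g' f; apply: ext_hom_eq; apply: (compDl HC).
- by move=> X Y Z g f f'; apply: ext_hom_eq; apply: (compDr HC).
- by move=> X Y Z r g f; apply: ext_hom_eq; apply: (compZl HC).
- by move=> X Y Z r g f; apply: ext_hom_eq; apply: (compZr HC).
Qed.

Lemma ExtCat_hom_finite : HomFinite C -> HomFinite (ExtCat HC HE).
Proof.
move=> HF X Y.
apply: (@finite_length_of_jointly_inj _ (hom_module ExtCat_linear X Y)
  (hom_module HC (xA X) (xA Y)) (hom_module HC (xC X) (xC Y))
  (fun f => (sval f).1) (fun f => (sval f).2)) => //.
- by move=> f f1 f2; apply: ext_hom_eq.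
- exact: HF.
- exact: HF.
Qed.

Lemma Emap_split_a (C' C0 A A' : Ob C) (c : Hom C' C0) (a : Hom A A') (x : Ecar E C0 A) :
  Emap c a x = Emap c (idm A') (Emap (idm C0) a x).
Proof. by rewrite -(bf_comp HE) !(comp1l HC). Qed.

Lemma Emap_split_c (C' C0 A A' : Ob C) (c : Hom C' C0) (a : Hom A A') (x : Ecar E C0 A) :
  Emap c a x = Emap (idm C') a (Emap c (idm A) x).
Proof. by rewrite -(bf_comp HE) !(comp1r HC). Qed.

Lemma ExtCat_idempotent_complete :
  idempotent_complete C -> idempotent_complete (ExtCat HC HE).
Proof.
move=> split_C [C0 A0 al] [[eA eC] /= e_mor] ee.
have [YA [iA [pA [piA ipA]]]] := split_C _ eA (congr1 (fun f => (sval f).1) ee).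
have [YC [iC [pC [piC ipC]]]] := split_C _ eC (congr1 (fun f => (sval f).2) ee).
pose al1 := Emap iC pA al.
have i_mor : Emap (idm YC) iA al1 = Emap iC (idm A0) al.
  rewrite -(bf_comp HE) (comp1r HC) ipA Emap_split_a e_mor -(bf_comp HE) (comp1l HC).
  by rewrite -ipC -(compA HC) piC (comp1r HC).
have p_mor : Emap (idm C0) pA al = Emap pC (idm YA) al1.
  rewrite -(bf_comp HE) (comp1l HC) ipC [RHS]Emap_split_c -e_mor -(bf_comp HE) (comp1l HC).
  by rewrite -ipA (compA HC) piA (comp1l HC).
exists (mkExtOb al1), (exist _ (iA, iC) i_mor), (exist _ (pA, pC) p_mor).
by split; apply: ext_hom_eq.
Qed.

End ExtensionCategory.

Theorem corollary4p3 (R : comPzRingType) (C : RCatData R) (E : ExtData C)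
  (HC : IsRLinear C) (Hadd : is_additive C) (HF : HomFinite C) (HK : KrullSchmidt C)
  (HE : IsRBilinBifunctor E) :
  IsRLinear (ExtCat HC HE) /\ HomFinite (ExtCat HC HE) /\ KrullSchmidt (ExtCat HC HE).
Proof.
have lin := @ExtCat_linear _ _ _ HC HE.
have fin := ExtCat_hom_finite (HC := HC) (HE := HE) HF.
split=> //; split=> //.
apply: (krull_schmidt_of_idempotent_complete lin fin).
exact/ExtCat_idempotent_complete/(idempotent_complete_of_krull_schmidt HC Hadd HK).
Qed.
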